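(* Let $\mathcal{M}=\{(x,y,z):x^2+y^2=1\}$ be the cylinder, let $G'$ be a $(2,2)$-sparse graph on vertices $v_1,\dots,v_n$ such that $v_1,\dots,v_4$ induce a proper subgraph isomorphic to $K_4$, and let $p=(p_1,\dots,p_n)\in\mathcal{M}^n$. Let $p^k=(p_1,p_2^k,p_3^k,p_4^k,p_5,\dots,p_n)\in\mathcal{M}^n$, $k=1,2,\dots$, with $p_i^k\to p_1$ as $k\to\infty$ for $i=2,3,4$, and suppose that (i) for each $k$ the framework $(K_4,(p_1,p_2^k,p_3^k,p_4^k))$ has a $2$-dimensional space of infinitesimal flexes on $\mathcal{M}$, and (ii) for each $k$ the space of infinitesimal flexes of $(G',p^k)$ on $\mathcal{M}$ has dimension greater than $2$. Then, with $p^\infty=(p_1,p_1,p_1,p_1,p_5,\dots,p_n)$, there is an infinitesimal flex $u'$ of $(G',p^\infty)$ on $\mathcal{M}$ of unit Euclidean norm of the form $u'=(0,0,0,0,u_5,\dots,u_n)$.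
   Context: A graph is $(2,2)$-sparse if every subgraph $H$ with at least one edge satisfies $|E(H)|\le 2|V(H)|-2$. For a graph with vertices $v_1,\dots,v_n$ and a (possibly degenerate, i.e. with coincident points) vector $q=(q_1,\dots,q_n)\in\mathcal{M}^n$, an infinitesimal flex of the framework $(G,q)$ on $\mathcal{M}$ is $u=(u_1,\dots,u_n)\in(\mathbb{R}^3)^n$ with each $u_i$ tangent to $\mathcal{M}$ at $q_i$ (i.e. $u_i\cdot N(q_i)=0$, where $N(q)=(2x,2y,0)$ at $q=(x,y,z)$) and $(u_i-u_j)\cdot(q_i-q_j)=0$ for every edge $v_iv_j$; equivalently $u$ lies in the kernel of the rigidity matrix $R_{\mathcal{M}}(G,q)$. *)

From HB Require Import structures.
From mathcomp Require Import all_boot all_order all_algebra.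
From mathcomp Require Import all_classical all_reals all_analysis.
Set Implicit Arguments. Unset Strict Implicit. Unset Printing Implicit Defensive.
Import Order.TTheory GRing.Theory Num.Theory.
Local Open Scope ring_scope.

(* Points of R^3 are row vectors 'rV[R]_3; coordinates x,y,z = entries 0,1,2. *)

Definition dot3 (R : nzRingType) (a b : 'rV[R]_3) : R := \sum_(c < 3) a 0 c * b 0 c.

Definition on_cyl (R : nzRingType) (q : 'rV[R]_3) : Prop :=
  q 0 0 ^+ 2 + q 0 1 ^+ 2 = 1.

Definition normal_cyl (R : nzRingType) (q : 'rV[R]_3) : 'rV[R]_3 :=
  \row_(c < 3) [:: 2 * q 0 0; 2 * q 0 1; 0]`_c.

(* A simple graph on vertex set 'I_n is a symmetric irreflexive relation G.
   Its edge set: unordered pairs {i,j} represented by (i,j) with i < j. *)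
Definition edges (n : nat) (G : rel 'I_n) : {set 'I_n * 'I_n} :=
  [set e : 'I_n * 'I_n | (val e.1 < val e.2)%N && G e.1 e.2].

Definition sparse22 (n : nat) (G : rel 'I_n) : Prop :=
  forall (V : {set 'I_n}) (F : {set 'I_n * 'I_n}),
    F \subset edges G ->
    (forall e, e \in F -> (e.1 \in V) && (e.2 \in V)) ->
    F != finset.set0 ->
    (#|F| <= 2 * #|V| - 2)%N.

Definition is_inf_flex (R : nzRingType) (n : nat) (G : rel 'I_n)
  (q u : 'I_n -> 'rV[R]_3) : Prop :=
  (forall i, dot3 (u i) (normal_cyl (q i)) = 0) /\
  (forall i j, G i j -> dot3 (u i - u j) (q i - q j) = 0).

Definition rig_constraints (R : nzRingType) (n : nat) (G : rel 'I_n)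
  (q : 'I_n -> 'rV[R]_3) (U : 'M[R]_(n, 3)) : 'rV[R]_(n * n + n) :=
  row_mx
    (mxvec (\matrix_(i < n, j < n)
              (if G i j then dot3 (row i U - row j U) (q i - q j) else 0)))
    (\row_(i < n) dot3 (row i U) (normal_cyl (q i))).

(* Rigidity matrix R_M(G,q) (transposed, acting on row vectors u in R^{3n},
   with extra zero rows/columns for non-edges, which do not affect the
   kernel): u *m rigidity_mx G q = rig_constraints G q (vec_mx u). *)
Definition rigidity_mx (R : nzRingType) (n : nat) (G : rel 'I_n)
  (q : 'I_n -> 'rV[R]_3) : 'M[R]_(n * 3, n * n + n) :=
  lin1_mx (fun v : 'rV[R]_(n * 3) => rig_constraints G q (vec_mx v)).

Definition flex_dim (R : fieldType) (n : nat) (G : rel 'I_n)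
  (q : 'I_n -> 'rV[R]_3) : nat :=
  \rank (kermx (rigidity_mx G q)).

Definition K4 : rel 'I_4 := fun i j => i != j.

From HB Require Import structures.
From mathcomp Require Import all_boot all_order all_algebra.
From mathcomp Require Import all_classical all_reals all_analysis.
From mathcomp Require Import ring zify.
Set Implicit Arguments. Unset Strict Implicit. Unset Printing Implicit Defensive.
Import Order.TTheory GRing.Theory Num.Theory.
Import numFieldTopology.Exports numFieldNormedType.Exports.
Local Open Scope classical_set_scope.
Local Open Scope ring_scope.

(* For every k, the flexes of (G', p^k) form a space of dimension > 2, while their
   restrictions to v1..v4 are flexes of the K4 subframework, a space of dimension 2.
   Hence some nonzero flex of (G', p^k) vanishes at v1..v4, i.e. the matrix stacking
   the rigidity matrix with the restriction to v1..v4 has a nontrivial left kernel.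
   Over the reals a matrix B has a nontrivial left kernel iff det (B B^T) = 0, a
   closed condition on the entries; the entries depend continuously on p^k, so the
   stacked matrix at p^oo also has a nonzero left kernel vector, which we normalise. *)

Section GramDeterminant.
Variable R : realFieldType.

Lemma mulmx_trmx_eq0 n (w : 'rV[R]_n) : (w *m w^T == 0) = (w == 0).
Proof.
apply/idP/eqP => [|->]; last by rewrite mul0mx.
move=> /eqP/matrixP/(_ 0 0); rewrite !mxE.
under eq_bigr do rewrite mxE -expr2.
move=> /psumr_eq0P sq0; apply/rowP => j; rewrite mxE.
by apply/eqP; rewrite -sqrf_eq0 sq0 // => i _; rewrite sqr_ge0.
Qed.

Lemma row_free_gram m n (B : 'M[R]_(m, n)) : row_free (B *m B^T) = row_free B.
Proof.
apply/idP/idP => [freeBB | freeB].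
  rewrite /row_free eqn_leq rank_leq_row /=.
  by rewrite -{1}(eqP freeBB) mxrankM_maxl.
apply: inj_row_free => u; rewrite mulmxA => uBBt0.
apply/(row_free_inj freeB); rewrite mul0mx; apply/eqP.
by rewrite -mulmx_trmx_eq0 trmx_mul !mulmxA uBBt0 mul0mx.
Qed.

Lemma row_free_gram_det m n (B : 'M[R]_(m, n)) :
  row_free B = (\det (B *m B^T) != 0).
Proof. by rewrite -row_free_gram row_free_unit unitmxE unitfE. Qed.

End GramDeterminant.

Section EntrywiseLimits.
Variables (R : realFieldType) (T : Type) (F : set_system T).
Context {FF : Filter F}.

Lemma cvg_bigsum (I : Type) (r : seq I) (f : I -> T -> R) (l : I -> R) :
  (forall i, f i @ F --> l i) ->
  (fun t => \sum_(i <- r) f i t) @ F --> \sum_(i <- r) l i.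
Proof.
move=> fl; elim: r => [|i r IHr].
  by rewrite big_nil; under eq_fun do rewrite big_nil; exact: cvg_cst.
by rewrite big_cons; under eq_fun do rewrite big_cons; exact: cvgD.
Qed.

Lemma cvg_bigprod (I : Type) (r : seq I) (f : I -> T -> R) (l : I -> R) :
  (forall i, f i @ F --> l i) ->
  (fun t => \prod_(i <- r) f i t) @ F --> \prod_(i <- r) l i.
Proof.
move=> fl; elim: r => [|i r IHr].
  by rewrite big_nil; under eq_fun do rewrite big_nil; exact: cvg_cst.
by rewrite big_cons; under eq_fun do rewrite big_cons; exact: cvgM.
Qed.

Lemma cvg_mulmx m n p (A : T -> 'M[R]_(m, n)) (B : T -> 'M[R]_(n, p))
    (A0 : 'M[R]_(m, n)) (B0 : 'M[R]_(n, p)) :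
  (forall i j, (fun t => A t i j) @ F --> A0 i j) ->
  (forall i j, (fun t => B t i j) @ F --> B0 i j) ->
  forall i j, (fun t => (A t *m B t) i j) @ F --> (A0 *m B0) i j.
Proof.
move=> AA0 BB0 i j; rewrite mxE; under eq_fun do rewrite mxE.
by apply: cvg_bigsum => k; exact: cvgM.
Qed.

Lemma cvg_det n (A : T -> 'M[R]_n) (A0 : 'M[R]_n) :
  (forall i j, (fun t => A t i j) @ F --> A0 i j) ->
  (fun t => \det (A t)) @ F --> \det A0.
Proof.
move=> AA0; apply: cvg_bigsum => s; apply: cvgM; first exact: cvg_cst.
by apply: cvg_bigprod => i; exact: AA0.
Qed.

Lemma cvg_row_mx m n1 n2 (A : T -> 'M[R]_(m, n1)) (B : T -> 'M[R]_(m, n2))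
    (A0 : 'M[R]_(m, n1)) (B0 : 'M[R]_(m, n2)) :
  (forall i j, (fun t => A t i j) @ F --> A0 i j) ->
  (forall i j, (fun t => B t i j) @ F --> B0 i j) ->
  forall i j, (fun t => row_mx (A t) (B t) i j) @ F --> row_mx A0 B0 i j.
Proof.
move=> AA0 BB0 i j.
have cvg_left k : (fun t => row_mx (A t) (B t) i (lshift n2 k)) @ F -->
                  row_mx A0 B0 i (lshift n2 k).
  by rewrite row_mxEl; under eq_cvg do rewrite row_mxEl; exact: AA0.
have cvg_right k : (fun t => row_mx (A t) (B t) i (rshift n1 k)) @ F -->
                   row_mx A0 B0 i (rshift n1 k).
  by rewrite row_mxEr; under eq_cvg do rewrite row_mxEr; exact: BB0.
by have [k ->|k ->] := split_ordP j; [exact: cvg_left | exact: cvg_right].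
Qed.

Lemma row_free_cvg_closed {PF : ProperFilter F} m n
    (A : T -> 'M[R]_(m, n)) (A0 : 'M[R]_(m, n)) :
  (forall i j, (fun t => A t i j) @ F --> A0 i j) ->
  (forall t, ~~ row_free (A t)) -> ~~ row_free A0.
Proof.
move=> AA0 dependentA; rewrite row_free_gram_det negbK; apply/eqP.
have AtA0t i j : (fun t => (A t)^T i j) @ F --> A0^T i j.
  by rewrite mxE; under eq_fun do rewrite mxE; exact: AA0.
have gram_cvg := cvg_det (cvg_mulmx AA0 AtA0t).
have gram0 : (fun t => \det (A t *m (A t)^T)) = fun=> 0.
  by apply/funext => t; apply/eqP; rewrite -[_ == 0]negbK -row_free_gram_det.
rewrite gram0 in gram_cvg; exact: (cvg_unique _ gram_cvg (cvg_cst _)).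
Qed.

End EntrywiseLimits.

Section RigidityMatrix.
Variable R : comNzRingType.

Lemma dot3DZl (a : R) (x y z : 'rV[R]_3) :
  dot3 (a *: x + y) z = a * dot3 x z + dot3 y z.
Proof.
rewrite /dot3 mulr_sumr -big_split; apply: eq_bigr => c _; rewrite !mxE /=; ring.
Qed.

Lemma dot3Zl (a : R) (x z : 'rV[R]_3) : dot3 (a *: x) z = a * dot3 x z.
Proof.
by rewrite /dot3 mulr_sumr; apply: eq_bigr => c _; rewrite mxE mulrA.
Qed.

Lemma dot3C (x y : 'rV[R]_3) : dot3 x y = dot3 y x.
Proof. by apply: eq_bigr => c _; rewrite mulrC. Qed.

Variables (n : nat) (G : rel 'I_n) (q : 'I_n -> 'rV[R]_3).

Lemma rig_constraints_is_linear : linear (rig_constraints G q).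
Proof.
move=> a U V; rewrite /rig_constraints scale_row_mx add_row_mx -linearP.
congr row_mx; last first.
  by apply/rowP => i; rewrite !mxE -dot3DZl !linearP.
congr mxvec; apply/matrixP => i j; rewrite !mxE; case: (G i j).
  by rewrite -dot3DZl !linearP /= scalerN scalerBr addrACA.
by rewrite mulr0 addr0.
Qed.

HB.instance Definition _ := GRing.isLinear.Build R 'M[R]_(n, 3) 'rV[R]_(n * n + n)
  _ (rig_constraints G q) rig_constraints_is_linear.

Lemma mul_rV_rigidity_mx (u : 'rV[R]_(n * 3)) :
  u *m rigidity_mx G q = rig_constraints G q (vec_mx u).
Proof. exact: (mul_rV_lin1 (rig_constraints G q \o vec_mx)). Qed.

Lemma rig_constraints_edge (U : 'M[R]_(n, 3)) i j :
  rig_constraints G q U 0 (lshift n (mxvec_index i j)) =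
  if G i j then dot3 (row i U - row j U) (q i - q j) else 0.
Proof. by rewrite /rig_constraints row_mxEl mxvecE mxE. Qed.

Lemma rig_constraints_vertex (U : 'M[R]_(n, 3)) i :
  rig_constraints G q U 0 (rshift (n * n) i) = dot3 (row i U) (normal_cyl (q i)).
Proof. by rewrite /rig_constraints row_mxEr mxE. Qed.

Lemma rig_constraints_eq0P (U : 'M[R]_(n, 3)) :
  rig_constraints G q U = 0 <-> is_inf_flex G q (fun i => row i U).
Proof.
rewrite /rig_constraints; split.
  move=> /eqP; rewrite row_mx_eq0 mxvec_eq0 => /andP[/eqP edges0 /eqP tangent0].
  split=> [i | i j Gij].
    by move/rowP/(_ i): tangent0; rewrite !mxE.
  by move/matrixP/(_ i j): edges0; rewrite !mxE Gij.
move=> [tangent edges]; apply/eqP; rewrite row_mx_eq0 mxvec_eq0.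
apply/andP; split; apply/eqP.
  by apply/matrixP => i j; rewrite !mxE; case: ifP => // /edges.
by apply/rowP => i; rewrite !mxE.
Qed.

Lemma rigidity_mx_kerP (u : 'rV[R]_(n * 3)) :
  u *m rigidity_mx G q = 0 <-> is_inf_flex G q (fun i => row i (vec_mx u)).
Proof. by rewrite mul_rV_rigidity_mx; exact: rig_constraints_eq0P. Qed.

End RigidityMatrix.

Lemma is_inf_flex_comp (R : nzRingType) m n (H : rel 'I_m) (G : rel 'I_n)
    (f : 'I_m -> 'I_n) (q u : 'I_n -> 'rV[R]_3) :
  (forall i j, H i j -> G (f i) (f j)) ->
  is_inf_flex G q u -> is_inf_flex H (q \o f) (u \o f).
Proof. by move=> HG [tangent edges]; split=> [i | i j /HG /edges] /=. Qed.

Lemma is_inf_flexZ (R : comNzRingType) n (G : rel 'I_n) (q u : 'I_n -> 'rV[R]_3)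
    (a : R) :
  is_inf_flex G q u -> is_inf_flex G q (fun i => a *: u i).
Proof.
move=> [tangent edges]; split=> [i | i j Gij]; first by rewrite dot3Zl tangent mulr0.
by rewrite -scalerBr dot3Zl edges ?mulr0.
Qed.

Lemma row_mx_ker_neq0 (F : fieldType) m n1 n2 n3 (A : 'M[F]_(m, n1))
    (P : 'M[F]_(m, n2)) (B : 'M[F]_(n2, n3)) :
  (forall u : 'rV[F]_m, u *m A = 0 -> u *m P *m B = 0) ->
  (\rank (kermx B) < \rank (kermx A))%N -> ~~ row_free (row_mx A P).
Proof.
move=> kerAP rank_lt.
have KP_sub : (kermx A *m P <= kermx B)%MS.
  rewrite sub_kermx; apply/eqP/row_matrixP => r; rewrite row0 2!row_mul kerAP //.
  by rewrite -row_mul mulmx_ker row0.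
have : (0 < \rank (kermx A :&: kermx P))%N.
  have := mxrank_mul_ker (kermx A) P; have := mxrankS KP_sub; lia.
rewrite lt0n mxrank_eq0 => /rowV0Pn[v /submx_trans vKP v0].
rewrite -kermx_eq0; apply/rowV0Pn; exists v => //.
have := vKP _ _ (capmxSl _ _); rewrite sub_kermx => /eqP vA.
have := vKP _ _ (capmxSr _ _); rewrite sub_kermx => /eqP vP.
by rewrite sub_kermx mul_mx_row vA vP row_mx0.
Qed.

Lemma mul_rV_lin_mulmx_rowsub (R : comNzRingType) m n p (f : 'I_m -> 'I_n)
    (u : 'rV[R]_(n * p)) :
  u *m lin_mulmx (rowsub f 1%:M) = mxvec (rowsub f (vec_mx u)).
Proof. by rewrite -{1}(vec_mxK u) mul_vec_lin /= -rowsubE. Qed.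

(* Left kernel: the infinitesimal flexes of (G, q) vanishing at the vertices f j. *)
Definition pinned_rigidity_mx (R : comNzRingType) m n (G : rel 'I_n)
    (f : 'I_m -> 'I_n) (q : 'I_n -> 'rV[R]_3) : 'M[R]_(n * 3, n * n + n + m * 3) :=
  row_mx (rigidity_mx G q) (lin_mulmx (rowsub f 1%:M)).

Lemma pinned_rigidity_mx_kerP (R : comNzRingType) m n (G : rel 'I_n)
    (f : 'I_m -> 'I_n) (q : 'I_n -> 'rV[R]_3) (u : 'rV[R]_(n * 3)) :
  u *m pinned_rigidity_mx G f q = 0 <->
  is_inf_flex G q (fun i => row i (vec_mx u)) /\ forall j, row (f j) (vec_mx u) = 0.
Proof.
rewrite -rigidity_mx_kerP /pinned_rigidity_mx mul_mx_row mul_rV_lin_mulmx_rowsub.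
split=> [/eqP | [-> pinned]].
  rewrite row_mx_eq0 mxvec_eq0 => /andP[/eqP -> /eqP pinned]; split=> // j.
  by rewrite -row_rowsub pinned row0.
suff -> : rowsub f (vec_mx u) = 0 by rewrite linear0 row_mx0.
by apply/row_matrixP => j; rewrite row_rowsub pinned row0.
Qed.

Lemma pinned_rigidity_mx_dependent (F : fieldType) m n (H : rel 'I_m)
    (G : rel 'I_n) (f : 'I_m -> 'I_n) (q : 'I_n -> 'rV[F]_3) :
  (forall i j, H i j -> G (f i) (f j)) ->
  (flex_dim H (q \o f) < flex_dim G q)%N -> ~~ row_free (pinned_rigidity_mx G f q).
Proof.
move=> HG dim_lt; apply: (row_mx_ker_neq0 (B := rigidity_mx H (q \o f))) => //.
move=> u /rigidity_mx_kerP flex; apply/rigidity_mx_kerP.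
rewrite mul_rV_lin_mulmx_rowsub mxvecK.
have := is_inf_flex_comp HG flex.
by congr is_inf_flex; apply/funext => j; rewrite row_rowsub.
Qed.

Section RigidityLimits.
Variables (R : realFieldType) (T : Type) (F : set_system T).
Context {FF : Filter F}.

Lemma cvg_dot3r (x : 'rV[R]_3) (v : T -> 'rV[R]_3) (v0 : 'rV[R]_3) :
  (forall c, (fun t => v t 0 c) @ F --> v0 0 c) ->
  (fun t => dot3 x (v t)) @ F --> dot3 x v0.
Proof.
move=> vv0; apply: cvg_bigsum => c; apply: cvgM; [exact: cvg_cst | exact: vv0].
Qed.

Lemma cvg_normal_cyl (v : T -> 'rV[R]_3) (v0 : 'rV[R]_3) :
  (forall c, (fun t => v t 0 c) @ F --> v0 0 c) ->
  forall c, (fun t => normal_cyl (v t) 0 c) @ F --> normal_cyl v0 0 c.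
Proof.
move=> vv0 c; rewrite mxE; under eq_fun do rewrite mxE.
case: c => [[|[|[|c]]] lt_c3] //=; try exact: cvg_cst.
  by apply: cvgM; [exact: cvg_cst | exact: vv0].
by apply: cvgM; [exact: cvg_cst | exact: vv0].
Qed.

Variables (n : nat) (G : rel 'I_n) (q : T -> 'I_n -> 'rV[R]_3) (q0 : 'I_n -> 'rV[R]_3).
Hypothesis qq0 : forall i c, (fun t => q t i 0 c) @ F --> q0 i 0 c.

Lemma cvg_rig_constraints_edge (U : 'M[R]_(n, 3)) i j :
  (fun t => rig_constraints G (q t) U 0 (lshift n (mxvec_index i j))) @ F -->
  rig_constraints G q0 U 0 (lshift n (mxvec_index i j)).
Proof.
rewrite rig_constraints_edge; under eq_cvg do rewrite rig_constraints_edge.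
case: (G i j); last exact: cvg_cst.
apply: cvg_dot3r => c; rewrite !mxE; under eq_cvg do rewrite !mxE.
by apply: cvgB; exact: qq0.
Qed.

Lemma cvg_rig_constraints_vertex (U : 'M[R]_(n, 3)) i :
  (fun t => rig_constraints G (q t) U 0 (rshift (n * n) i)) @ F -->
  rig_constraints G q0 U 0 (rshift (n * n) i).
Proof.
rewrite rig_constraints_vertex; under eq_cvg do rewrite rig_constraints_vertex.
by apply: cvg_dot3r; exact: cvg_normal_cyl.
Qed.

Lemma cvg_rigidity_mx a b :
  (fun t => rigidity_mx G (q t) a b) @ F --> rigidity_mx G q0 a b.
Proof.
pose E := vec_mx (delta_mx 0 a : 'rV[R]_(n * 3)).
have entryE q' : rigidity_mx G q' a b = rig_constraints G q' E 0 b.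
  by rewrite /E -(mul_rV_rigidity_mx G q') -rowE [RHS]mxE.
rewrite (entryE q0); under eq_cvg do rewrite entryE.
have [j ->|i ->] := split_ordP b; last exact: cvg_rig_constraints_vertex.
by have [i i'] := mxvec_indexP j; exact: cvg_rig_constraints_edge.
Qed.

Lemma cvg_pinned_rigidity_mx m (f : 'I_m -> 'I_n) a b :
  (fun t => pinned_rigidity_mx G f (q t) a b) @ F --> pinned_rigidity_mx G f q0 a b.
Proof. by apply: cvg_row_mx => {}a {}b; [exact: cvg_rigidity_mx | exact: cvg_cst]. Qed.

End RigidityLimits.

Lemma sum_dot3_normalize (R : rcfType) n (U : 'M[R]_(n, 3)) :
  U != 0 -> exists a : R, \sum_i dot3 (a *: row i U) (a *: row i U) = 1.
Proof.
move=> U0; pose s := \sum_i dot3 (row i U) (row i U).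
have sE : s = \sum_i \sum_c U i c ^+ 2.
  by apply: eq_bigr => i _; apply: eq_bigr => c _; rewrite mxE expr2.
have row_ge0 i : 0 <= \sum_c U i c ^+ 2 by apply: sumr_ge0 => c _; rewrite sqr_ge0.
have s_ge0 : 0 <= s by rewrite sE; apply: sumr_ge0 => i _.
have s_neq0 : s != 0.
  apply: contra U0 => /eqP; rewrite sE => /(psumr_eq0P (fun i _ => row_ge0 i)) rows0.
  apply/eqP/matrixP => i c; rewrite mxE; apply/eqP; rewrite -sqrf_eq0.
  by rewrite (psumr_eq0P _ (rows0 i isT)) // => c' _; rewrite sqr_ge0.
exists (Num.sqrt s)^-1.
under eq_bigr do rewrite dot3Zl dot3C dot3Zl mulrA.
rewrite -mulr_sumr -/s -expr2 exprVn sqr_sqrtr // mulVf //.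
Qed.

Lemma pinned_unit_flex (R : rcfType) m n (G : rel 'I_n) (f : 'I_m -> 'I_n)
    (q : 'I_n -> 'rV[R]_3) :
  ~~ row_free (pinned_rigidity_mx G f q) ->
  exists u : 'I_n -> 'rV[R]_3, [/\ is_inf_flex G q u, forall j, u (f j) = 0
                                  & \sum_i dot3 (u i) (u i) = 1].
Proof.
rewrite -kermx_eq0 => /rowV0Pn[u /sub_kermxP/pinned_rigidity_mx_kerP kerPu u0].
have [flex pinned] := kerPu.
have [a norm1] : exists a : R, \sum_i dot3 (a *: row i (vec_mx u)) (a *: row i (vec_mx u)) = 1.
  by apply: sum_dot3_normalize; rewrite vec_mx_eq0.
exists (fun i => a *: row i (vec_mx u)); split=> //; first exact: is_inf_flexZ.
by move=> j; rewrite pinned scaler0.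
Qed.

Theorem lemma5p2 (R : realType) (n : nat) (hn : (4 < n)%N)
  (G : rel 'I_n)
  (Gsym : symmetric G) (Girr : irreflexive G)
  (Gsp : sparse22 G)
  (GK4 : forall i j : 'I_n, (val i < 4)%N -> (val j < 4)%N -> i != j -> G i j)
  (p : 'I_n -> 'rV[R]_3) (hp : forall i, on_cyl (p i))
  (pk : nat -> 'I_n -> 'rV[R]_3)
  (hpk_cyl : forall k i, on_cyl (pk k i))
  (hpk_fix : forall k (i : 'I_n), (val i == 0)%N || (4 <= val i)%N -> pk k i = p i)
  (hpk_cvg : forall i : 'I_n, (0 < val i < 4)%N ->
     (fun k => pk k i) @ \oo --> p (Ordinal (leq_trans (isT : (0 < 5)%N) hn)))
  (hK4 : forall k, flex_dim K4 (fun i : 'I_4 => pk k (widen_ord (ltnW hn) i)) = 2%N)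
  (hG : forall k, (2 < flex_dim G (pk k))%N) :
  let p1 := p (Ordinal (leq_trans (isT : (0 < 5)%N) hn)) in
  let pinf := fun i : 'I_n => if (val i < 4)%N then p1 else p i in
  exists u : 'I_n -> 'rV[R]_3,
    is_inf_flex G pinf u /\
    (forall i : 'I_n, (val i < 4)%N -> u i = 0) /\
    \sum_(i < n) dot3 (u i) (u i) = 1.
Proof.
move=> p1 pinf; pose f := widen_ord (ltnW hn).
have K4_sub i j : K4 i j -> G (f i) (f j).
  by move=> neq_ij; apply: GK4; rewrite /f /= ?ltn_ord.
have dependent k : ~~ row_free (pinned_rigidity_mx G f (pk k)).
  by apply: pinned_rigidity_mx_dependent K4_sub _; rewrite (hK4 k).
have pk_cvg i c : (fun k => pk k i 0 c) @ \oo --> pinf i 0 c.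
  have [i_lt4 | i_ge4] := ltnP (val i) 4; last first.
    rewrite (_ : pinf i = p i); last by rewrite /pinf ltnNge i_ge4.
    by under eq_cvg do rewrite hpk_fix ?i_ge4 ?orbT //; exact: cvg_cst.
  rewrite (_ : pinf i = p1); last by rewrite /pinf i_lt4.
  have [i0 | i_gt0] := posnP (val i).
    have -> : i = Ordinal (leq_trans (isT : (0 < 5)%N) hn) by apply: val_inj.
    by under eq_cvg do rewrite hpk_fix //; exact: cvg_cst.
  have i_mid : (0 < val i < 4)%N by rewrite i_gt0.
  exact: (continuous_cvg _ (@coord_continuous _ 1 3 0 c _) (hpk_cvg i i_mid)).
have pinned_cvg a b : (fun k => pinned_rigidity_mx G f (pk k) a b) @ \oo -->
                      pinned_rigidity_mx G f pinf a b.
  exact: cvg_pinned_rigidity_mx.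
have : ~~ row_free (pinned_rigidity_mx G f pinf).
  by apply: row_free_cvg_closed pinned_cvg dependent.
move=> /pinned_unit_flex[u [flex pinned norm1]]; exists u; split=> //; split=> // i i_lt4.
by rewrite -(pinned (Ordinal i_lt4)); congr u; apply: val_inj.
Qed.
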